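(* In $\mathbb{C}^3\otimes\mathbb{C}^3\otimes\mathbb{C}^4$ (parties Alice $A$, Bob $B$, Charlie $C$), the strongly nonlocal unextendible product basis $\mathcal{U}=\bigcup_{i=1}^3(\mathcal{A}_i\cup\mathcal{B}_i)\cup\mathcal{F}\cup\{|S\rangle\}$ defined in the context can be perfectly distinguished by local operations and classical communication when, as an additional resource, Alice and Bob share one copy of the two-qubit maximally entangled state $|\Phi(2)\rangle=|00\rangle+|11\rangle$, Bob and Charlie share one copy of $|\Phi(2)\rangle$, and Alice and Charlie share no entanglement. This consumes $2$ ebits of entanglement.
   Context: Computational bases $\{|0\rangle,|1\rangle,|2\rangle\}$ for $A,B$ and $\{|0\rangle,\dots,|3\rangle\}$ for $C$; $w_3=e^{2\pi\sqrt{-1}/3}$; states are unnormalized. For $X\in\{A,B\}$ and $s\in\{0,1\}$: $|\eta_s\rangle_X=|0\rangle+(-1)^s|1\rangle$, $|\xi_s\rangle_X=|1\rangle+(-1)^s|2\rangle$. For $s\in\{0,1,2\}$: $|\eta_s\rangle_C=\sum_{t=0}^2 w_3^{st}|t\rangle$, $|\xi_s\rangle_C=\sum_{t=0}^2w_3^{st}|t+1\rangle$. Define $\mathcal{A}_1=\{|\xi_i\rangle_A|0\rangle_B|\eta_k\rangle_C:(i,k)\in\{0,1\}\times\{0,1,2\}\setminus\{(0,0)\}\}$, $\mathcal{A}_2=\{|\xi_i\rangle_A|\eta_j\rangle_B|3\rangle_C:(i,j)\in\{0,1\}^2\setminus\{(0,0)\}\}$, $\mathcal{A}_3=\{|2\rangle_A|\xi_j\rangle_B|\eta_k\rangle_C:(j,k)\in\{0,1\}\times\{0,1,2\}\setminus\{(0,0)\}\}$,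 $\mathcal{B}_1=\{|\eta_i\rangle_A|2\rangle_B|\xi_k\rangle_C:(i,k)\in\{0,1\}\times\{0,1,2\}\setminus\{(0,0)\}\}$, $\mathcal{B}_2=\{|\eta_i\rangle_A|\xi_j\rangle_B|0\rangle_C:(i,j)\in\{0,1\}^2\setminus\{(0,0)\}\}$, $\mathcal{B}_3=\{|0\rangle_A|\eta_j\rangle_B|\xi_k\rangle_C:(j,k)\in\{0,1\}\times\{0,1,2\}\setminus\{(0,0)\}\}$, $\mathcal{F}=\{|1\rangle_A|1\rangle_B(|1\rangle-|2\rangle)_C\}$, $|S\rangle=(|0\rangle+|1\rangle+|2\rangle)_A(|0\rangle+|1\rangle+|2\rangle)_B(|0\rangle+|1\rangle+|2\rangle+|3\rangle)_C$. This is a set of 28 mutually orthogonal product states. ''Perfectly distinguished'' means: given an unknown state secretly chosen from the set (together with the shared entangled resource), the parties can determine with certainty which state it is using only LOCC. *)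

From mathcomp Require Import all_boot all_order all_algebra all_field.
Set Implicit Arguments. Unset Strict Implicit. Unset Printing Implicit Defensive.
Import Order.TTheory GRing.Theory Num.Theory.
Local Open Scope ring_scope.

(* w3 = exp(2 pi i / 3) *)
Definition w3 : algC := (-1 + 'i * sqrtC 3%:R) / 2%:R.

Definition ket (n : nat) (j : nat) : 'I_n -> algC := fun x => (x == j :> nat)%:R.
Arguments ket : clear implicits.

Definition etaAB (s : nat) : 'I_3 -> algC :=
  fun t => if (t == 0 :> nat) then 1 else if (t == 1 :> nat) then (-1) ^+ s else 0.
Definition xiAB (s : nat) : 'I_3 -> algC :=
  fun t => if (t == 1 :> nat) then 1 else if (t == 2 :> nat) then (-1) ^+ s else 0.
Definition etaC (s : nat) : 'I_4 -> algC :=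
  fun t => if (t < 3)%N then w3 ^+ (s * t) else 0.
Definition xiC (s : nat) : 'I_4 -> algC :=
  fun t => if (0 < t)%N then w3 ^+ (s * t.-1) else 0.

Definition idx3 := ('I_3 * 'I_3 * 'I_4)%type.
Definition pstate (a : 'I_3 -> algC) (b : 'I_3 -> algC) (c : 'I_4 -> algC) :
  idx3 -> algC := fun x => a x.1.1 * b x.1.2 * c x.2.

Definition pairs23 : seq (nat * nat) :=
  [seq p <- [seq (i, k) | i <- [:: 0; 1]%N, k <- [:: 0; 1; 2]%N] | p != (0, 0)%N].
Definition pairs22 : seq (nat * nat) :=
  [seq p <- [seq (i, j) | i <- [:: 0; 1]%N, j <- [:: 0; 1]%N] | p != (0, 0)%N].

Definition setA1 := [seq pstate (xiAB p.1) (ket 3 0) (etaC p.2) | p <- pairs23].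
Definition setA2 := [seq pstate (xiAB p.1) (etaAB p.2) (ket 4 3) | p <- pairs22].
Definition setA3 := [seq pstate (ket 3 2) (xiAB p.1) (etaC p.2) | p <- pairs23].
Definition setB1 := [seq pstate (etaAB p.1) (ket 3 2) (xiC p.2) | p <- pairs23].
Definition setB2 := [seq pstate (etaAB p.1) (xiAB p.2) (ket 4 0) | p <- pairs22].
Definition setB3 := [seq pstate (ket 3 0) (etaAB p.1) (xiC p.2) | p <- pairs23].
Definition setF := [:: pstate (ket 3 1) (ket 3 1) (fun t => ket 4 1 t - ket 4 2 t)].
Definition stopper : idx3 -> algC := pstate (fun _ => 1) (fun _ => 1) (fun _ => 1).

Definition UPB : seq (idx3 -> algC) :=
  setA1 ++ setA2 ++ setA3 ++ setB1 ++ setB2 ++ setB3 ++ setF ++ [:: stopper].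

(* Alice: A (dim 3) x a1 (qubit, ebit with Bob)
   Bob:   B (dim 3) x b1 (qubit, ebit with Alice) x b2 (qubit, ebit with Charlie)
   Charlie: C (dim 4) x c2 (qubit, ebit with Bob) *)
Definition LA := ('I_3 * 'I_2)%type.
Definition LB := ('I_3 * 'I_2 * 'I_2)%type.
Definition LC := ('I_4 * 'I_2)%type.
Definition gidx := (LA * LB * LC)%type.
Definition gstate := gidx -> algC.

(* |Phi(2)> = |00> + |11> (unnormalized) *)
Definition Phi2 (x y : 'I_2) : algC := (x == y :> nat)%:R.

Definition with_resource (psi : idx3 -> algC) : gstate :=
  fun g => let: (a, a1, (b, b1, b2), (c, c2)) := g in
           psi (a, b, c) * Phi2 a1 b1 * Phi2 b2 c2.

(* A protocol is a finite tree: at each node one party applies a local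
   instrument given by Kraus operators K (matrices indexed by its local basis,
   K z x = <z|K|x>), all outcomes are broadcast, and the continuation depends on
   the outcome. A leaf announces a guess (an index into the list of states). *)
Inductive protocol : Type :=
| Leaf of nat
| StepA of seq ((LA -> LA -> algC) * protocol)
| StepB of seq ((LB -> LB -> algC) * protocol)
| StepC of seq ((LC -> LC -> algC) * protocol).

Definition complete (T : finType) (ks : seq (T -> T -> algC)) : Prop :=
  forall x y : T, \sum_(K <- ks) \sum_(z : T) (K z x)^* * K z y = (x == y)%:R.

Fixpoint valid (P : protocol) : Prop :=
  match P with
  | Leaf _ => True
  | StepA br => complete (map fst br) /\
      (fix vs (l : seq ((LA -> LA -> algC) * protocol)) : Prop :=
         match l with [::] => True | (_, Q) :: l' => valid Q /\ vs l' end) br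
  | StepB br => complete (map fst br) /\
      (fix vs (l : seq ((LB -> LB -> algC) * protocol)) : Prop :=
         match l with [::] => True | (_, Q) :: l' => valid Q /\ vs l' end) br
  | StepC br => complete (map fst br) /\
      (fix vs (l : seq ((LC -> LC -> algC) * protocol)) : Prop :=
         match l with [::] => True | (_, Q) :: l' => valid Q /\ vs l' end) br
  end.

Definition applyA (K : LA -> LA -> algC) (psi : gstate) : gstate :=
  fun g => \sum_(x : LA) K g.1.1 x * psi (x, g.1.2, g.2).
Definition applyB (K : LB -> LB -> algC) (psi : gstate) : gstate :=
  fun g => \sum_(x : LB) K g.1.2 x * psi (g.1.1, x, g.2).
Definition applyC (K : LC -> LC -> algC) (psi : gstate) : gstate :=
  fun g => \sum_(x : LC) K g.2 x * psi (g.1.1, g.1.2, x).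

(* Running P on (unnormalized) state psi never produces, with nonzero
   probability, a leaf whose guess differs from i. *)
Fixpoint always_guesses (P : protocol) (psi : gstate) (i : nat) : Prop :=
  match P with
  | Leaf g => (forall x, psi x = 0) \/ g = i
  | StepA br =>
      (fix cs (l : seq ((LA -> LA -> algC) * protocol)) : Prop :=
         match l with [::] => True
         | (K, Q) :: l' => always_guesses Q (applyA K psi) i /\ cs l' end) br
  | StepB br =>
      (fix cs (l : seq ((LB -> LB -> algC) * protocol)) : Prop :=
         match l with [::] => True
         | (K, Q) :: l' => always_guesses Q (applyB K psi) i /\ cs l' end) br
  | StepC br =>
      (fix cs (l : seq ((LC -> LC -> algC) * protocol)) : Prop :=
         match l with [::] => True
         | (K, Q) :: l' => always_guesses Q (applyC K psi) i /\ cs l' end) br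
  end.

(* The list of states S is perfectly LOCC-distinguishable (with the resource
   already included in the states) *)
Definition LOCC_perfectly_distinguishable (S : seq gstate) : Prop :=
  exists P : protocol, valid P /\
    forall i : nat, (i < size S)%N -> always_guesses P (nth (fun _ => 0) S i) i.

From Stdlib Require Import ZArith FunctionalExtensionality.
From mathcomp Require Import all_boot all_order all_algebra all_field ssrZ ring.
Set Implicit Arguments. Unset Strict Implicit. Unset Printing Implicit Defensive.
Import Order.TTheory GRing.Theory Num.Theory.
Local Open Scope ring_scope.

(* Alice first copies the bit [a = 0] into her half of the ebit shared with Bob and erases
   her half, and Charlie does the same with [c = 3]; Bob can then project onto regions of
   the triples (b, [a = 0], [c = 3]) although a and c are not his.  He erases the copies by
   measuring his halves in the Hadamard basis, and the resulting phases are undone by Alice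
   and Charlie.  On each of the three regions the surviving states are then told apart by
   local measurements in the bases formed by the UPB vectors themselves.  All amplitudes
   involved lie in Z[w3], so the completeness of every instrument and the outcome of the
   protocol on each of the 28 states are verified by exact computation, with a checker
   proved sound against the semantics of [protocol]. *)

Lemma sum_seq_enum (T : finType) (r : seq T) (F : T -> algC) :
  uniq r -> (forall x, x \in r) -> \sum_(x <- r) F x = \sum_x F x.
Proof. by move=> r_uniq mem_r; rewrite big_uniq //; apply: eq_bigl. Qed.

Lemma sum_if_eq (T : finType) (a : T) (b : bool) (F : T -> algC) :
  \sum_x (if (x == a) && b then F x else 0) = if b then F a else 0.
Proof.
case: b; last by rewrite big1 // => x _; rewrite andbF.
by rewrite -big_mkcond (eq_bigl (pred1 a)) ?big_pred1_eq // => x; rewrite andbT.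
Qed.

Lemma eq_big_all (X : Type) (P : pred X) (F G : X -> algC) (l : seq X) :
  all P l -> (forall x, P x -> F x = G x) -> \sum_(x <- l) F x = \sum_(x <- l) G x.
Proof.
by elim: l => [|x l IH] /=; rewrite ?big_nil // => /andP[Px Pl] FG; rewrite !big_cons FG ?IH.
Qed.

Lemma all_In (X : Type) (f : pred X) (l : seq X) x : all f l -> List.In x l -> f x.
Proof. by elim: l => //= y l IH /andP[fy fl] [<- // | /IH]; apply. Qed.

Definition pair_seq (A B : Type) (s : seq A) (t : seq B) : seq (A * B) :=
  [seq (x, y) | x <- s, y <- t].

Lemma pair_seq_uniq (A B : eqType) (s : seq A) (t : seq B) :
  uniq s -> uniq t -> uniq (pair_seq s t).
Proof. by move=> s_uniq t_uniq; apply: allpairs_uniq => // -[? ?] [? ?] _ _ /= [-> ->]. Qed.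

Definition ord_opt n i : option 'I_n :=
  (if (i < n)%N as b return (i < n)%N = b -> option 'I_n
   then fun lt_i_n => Some (Ordinal lt_i_n) else fun _ => None) erefl.

Lemma ord_optE n i : ord_opt n i = insub i.
Proof.
rewrite /ord_opt; move: (erefl (i < n)%N); case: {2 3}(i < n)%N => lt_i_n.
  by rewrite insubT /=; congr Some; apply: val_inj.
by rewrite insubF.
Qed.

(* [ord_enum] goes through the opaque [idP], so it does not evaluate under [vm_compute]. *)
Definition ord_seq n : seq 'I_n := pmap (ord_opt n) (iota 0 n).

Lemma ord_seqE n : ord_seq n = ord_enum n.
Proof. by apply: eq_pmap => i; rewrite ord_optE. Qed.

(** * Exact arithmetic in Z[w3] *)

Lemma w3_sqr : w3 ^+ 2 = -1 - w3.
Proof.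
have i_sqrt3_sqr : ('i * sqrtC (3%:R : algC)) ^+ 2 = - 3%:R.
  by rewrite exprMn sqrCi sqrtCK mulN1r.
have two_neq0 : (2%:R : algC) != 0 by rewrite pnatr_eq0.
apply/eqP; rewrite -subr_eq0; apply/eqP.
have -> : w3 ^+ 2 - (-1 - w3) = (('i * sqrtC 3%:R) ^+ 2 + 3%:R) / 4%:R.
  by rewrite /w3; field.
by rewrite i_sqrt3_sqr addNr mul0r.
Qed.

Lemma conj_w3 : w3^* = -1 - w3.
Proof.
have two_neq0 : (2%:R : algC) != 0 by rewrite pnatr_eq0.
have sqrt3_real : (sqrtC (3%:R : algC))^* = sqrtC 3%:R.
  by rewrite geC0_conj ?sqrtC_ge0 ?ler0n.
rewrite /w3 fmorph_div rmorphD rmorphN rmorph1 rmorphM /= conjCi sqrt3_real rmorph_nat.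
by field.
Qed.

Lemma w3_cube : w3 ^+ 3 = 1.
Proof. by rewrite exprS w3_sqr mulrBr mulrN1 -expr2 w3_sqr; ring. Qed.

Definition eis := (Z * Z)%type.

Definition Zval (a : Z) : algC := (int_of_Z a)%:~R.
Definition eis_val (x : eis) : algC := Zval x.1 + Zval x.2 * w3.
(* Pairs carry MathComp's componentwise ring structure: only its addition is used, and
   products go through [eis_mul], which reduces w3 ^+ 2 to -1 - w3. *)
Definition eis_mul (x y : eis) : eis :=
  (x.1 * y.1 - x.2 * y.2, x.1 * y.2 + x.2 * y.1 - x.2 * y.2).
Definition eis_conj (x : eis) : eis := (x.1 - x.2, - x.2).
(* Big operators are locked and do not evaluate under [vm_compute]. *)
Definition eis_sum (X : Type) (l : seq X) (f : X -> eis) : eis :=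
  foldr (fun x acc => f x + acc) 0 l.

Lemma ZvalD : {morph Zval : a b / a + b}.
Proof. by move=> a b; rewrite /Zval !rmorphD. Qed.

Lemma ZvalN : {morph Zval : a / - a}.
Proof. by move=> a; rewrite /Zval !rmorphN. Qed.

Lemma ZvalM : {morph Zval : a b / a * b}.
Proof. by move=> a b; rewrite /Zval !rmorphM. Qed.

Lemma Zval_conj a : (Zval a)^* = Zval a.
Proof. exact: rmorph_int. Qed.

Lemma Zval0 : Zval 0 = 0.
Proof. by rewrite /Zval !raddf0. Qed.

Lemma Zval1 : Zval 1 = 1.
Proof. by rewrite /Zval !rmorph1. Qed.

Lemma eis_val0 : eis_val 0 = 0.
Proof. by rewrite /eis_val /= Zval0 mul0r addr0. Qed.

Lemma eis_valD : {morph eis_val : x y / x + y}.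
Proof. by move=> x y; rewrite /eis_val /= !ZvalD; ring. Qed.

Lemma eis_valM : {morph eis_val : x y / eis_mul x y >-> x * y}.
Proof.
move=> x y; rewrite /eis_val /= !(ZvalD, ZvalN, ZvalM).
set a := Zval x.1; set b := Zval x.2; set c := Zval y.1; set d := Zval y.2.
have -> : (a + b * w3) * (c + d * w3) = a * c + (a * d + b * c) * w3 + b * d * w3 ^+ 2.
  by ring.
by rewrite w3_sqr; ring.
Qed.

Lemma eis_val_conj x : eis_val (eis_conj x) = (eis_val x)^*.
Proof. by rewrite /eis_val /= rmorphD rmorphM /= !Zval_conj conj_w3 ZvalD ZvalN; ring. Qed.

Lemma eis_val_sum (X : Type) (l : seq X) (f : X -> eis) :
  eis_val (eis_sum l f) = \sum_(x <- l) eis_val (f x).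
Proof. by elim: l => [|x l IH]; rewrite ?big_nil ?eis_val0 // big_cons eis_valD IH. Qed.

Lemma Zval_eq0 a : (Zval a == 0) = (a == 0).
Proof. by rewrite /Zval intr_eq0 -(raddf0 int_of_Z) (inj_eq (can_inj int_of_ZK)). Qed.

Lemma eis_val_Z a : eis_val (a, 0) = Zval a.
Proof. by rewrite /eis_val /= Zval0 mul0r addr0. Qed.

Lemma eis_valN x : eis_val (- x) = - eis_val x.
Proof. by rewrite /eis_val /= !ZvalN; ring. Qed.

Lemma eis_val1 : eis_val (1, 0) = 1.
Proof. by rewrite eis_val_Z Zval1. Qed.

(** * Sparse global states *)

Section SparseVectors.
Variable T : eqType.

Definition sparse_val (s : seq (T * eis)) (g : T) : algC :=
  \sum_(q <- s | q.1 == g) eis_val q.2.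

Lemma sparse_val_cons q s g :
  sparse_val (q :: s) g = (if q.1 == g then eis_val q.2 else 0) + sparse_val s g.
Proof. by rewrite /sparse_val big_cons; case: ifP; rewrite ?add0r. Qed.

Lemma sparse_val_nonzero s g : sparse_val [seq q <- s | q.2 != 0] g = sparse_val s g.
Proof.
elim: s => //= q s IH; case: (eqVneq q.2 0) => [q0|_] /=.
  by rewrite sparse_val_cons IH q0 eis_val0 if_same add0r.
by rewrite !sparse_val_cons IH.
Qed.

Variable eqb : rel T.
Hypothesis eqbE : eqb =2 eq_op.

Fixpoint sparse_insert (q : T * eis) (s : seq (T * eis)) : seq (T * eis) :=
  if s is q' :: s' then
    if eqb q'.1 q.1 then (q'.1, q'.2 + q.2) :: s' else q' :: sparse_insert q s'
  else [:: q].

Lemma sparse_val_insert q s g : sparse_val (sparse_insert q s) g = sparse_val (q :: s) g.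
Proof.
elim: s => //= q' s IH; rewrite eqbE; case: (eqVneq q'.1 q.1) => [eq_q|_].
  by rewrite !sparse_val_cons /= eis_valD eq_q; case: ifP => _; ring.
by rewrite !sparse_val_cons IH sparse_val_cons addrCA.
Qed.

Definition sparse_norm (s : seq (T * eis)) : seq (T * eis) :=
  [seq q <- foldr sparse_insert [::] [seq q <- s | q.2 != 0] | q.2 != 0].

Lemma sparse_val_norm s g : sparse_val (sparse_norm s) g = sparse_val s g.
Proof.
rewrite !sparse_val_nonzero -[RHS]sparse_val_nonzero.
by elim: [seq q <- s | q.2 != 0] => //= q s' IH; rewrite sparse_val_insert !sparse_val_cons IH.
Qed.

Definition sparse_of (r : seq T) (f : T -> eis) : seq (T * eis) :=
  [seq q <- [seq (x, f x) | x <- r] | q.2 != 0].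

Lemma sparse_val_of (r : seq T) f g :
  uniq r -> g \in r -> sparse_val (sparse_of r f) g = eis_val (f g).
Proof.
move=> r_uniq r_g; rewrite sparse_val_nonzero /sparse_val big_map -big_filter.
by rewrite (filter_pred1_uniq r_uniq r_g) big_seq1.
Qed.

End SparseVectors.

Inductive party := Alice | Bob | Charlie.

Definition local (p : party) : finType :=
  match p with Alice => LA | Bob => LB | Charlie => LC end.

(* Binders are given the plain types LA, LB, LC, here and below: under [vm_compute] a type
   such as [local p] rebuilds its canonical structures at every call. *)
Definition local_get (p : party) : gidx -> local p :=
  match p with
  | Alice => fun g => g.1.1 | Bob => fun g => g.1.2 | Charlie => fun g => g.2
  end.

Definition local_set (p : party) : gidx -> local p -> gidx :=
  match p with
  | Alice => fun g (x : LA) => (x, g.1.2, g.2)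
  | Bob => fun g (x : LB) => (g.1.1, x, g.2)
  | Charlie => fun g (x : LC) => (g.1.1, g.1.2, x)
  end.

Arguments local_set : clear implicits.

Lemma local_get_set p g (x : local p) : local_get p (local_set p g x) = x.
Proof. by case: p x. Qed.

Lemma local_set_get p (g : gidx) : local_set p g (local_get p g) = g.
Proof. by case: p; case: g => [[]]. Qed.

Lemma local_set_set p g (x y : local p) : local_set p (local_set p g x) y = local_set p g y.
Proof. by case: p x y. Qed.

Lemma local_set_eq p h (z : local p) g :
  (local_set p h z == g) = (z == local_get p g) && (local_set p h (local_get p g) == g).
Proof.
apply/eqP/andP => [<-|[/eqP-> /eqP //]].
by rewrite local_get_set !eqxx.
Qed.

Lemma local_set_swap p g h :
  (local_set p g (local_get p h) == h) = (local_set p h (local_get p g) == g).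
Proof.
suff swap g' h' : local_set p g' (local_get p h') = h' -> local_set p h' (local_get p g') = g'.
  by apply/eqP/eqP => /swap.
by move=> e; rewrite -{1}e local_set_set local_set_get.
Qed.

Definition local_seq (p : party) : seq (local p) :=
  match p with
  | Alice => pair_seq (ord_seq 3) (ord_seq 2)
  | Bob => pair_seq (pair_seq (ord_seq 3) (ord_seq 2)) (ord_seq 2)
  | Charlie => pair_seq (ord_seq 4) (ord_seq 2)
  end.

Lemma local_seq_uniq p : uniq (local_seq p).
Proof. by case: p; rewrite /local_seq !pair_seq_uniq // ord_seqE ord_enum_uniq. Qed.

Lemma mem_local_seq p (x : local p) : x \in local_seq p.
Proof.
by case: p x => [[a a1]|[[b b1] b2]|[c c2]]; do ?apply: allpairs_f; rewrite ord_seqE mem_ord_enum.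
Qed.

Definition gidx_seq : seq gidx :=
  pair_seq (pair_seq (local_seq Alice) (local_seq Bob)) (local_seq Charlie).

(* A version of [==] that is fast under [vm_compute]. *)
Definition gidx_eqb (g h : gidx) : bool :=
  let: (a, a1, (b, b1, b2), (c, c2)) := g in
  let: (a', a1', (b', b1', b2'), (c', c2')) := h in
  [&& a == a' :> nat, a1 == a1' :> nat, b == b' :> nat, b1 == b1' :> nat,
      b2 == b2' :> nat, c == c' :> nat & c2 == c2' :> nat].

Lemma gidx_eqbE : gidx_eqb =2 eq_op.
Proof.
by case=> [[[a a1] [[b b1] b2]] [c c2]] [[[? ?] [[? ?] ?]] [? ?]]; rewrite /= !xpair_eqE -!andbA.
Qed.

Lemma gidx_seq_uniq : uniq gidx_seq.
Proof. by rewrite !pair_seq_uniq ?local_seq_uniq. Qed.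

Lemma mem_gidx_seq g : g \in gidx_seq.
Proof. by case: g => [[a b] c]; do ?apply: allpairs_f; apply: (mem_local_seq (p := _)). Qed.

Definition apply_local (p : party) (K : local p -> local p -> algC) (psi : gstate) : gstate :=
  fun g => \sum_(x : local p) K (local_get p g) x * psi (local_set p g x).

Definition apply_sparse (p : party) (E : local p -> local p -> eis) (s : seq (gidx * eis)) :=
  sparse_norm gidx_eqb [seq (local_set p q.1 z, eis_mul (E z (local_get p q.1)) q.2)
              | q <- s, z <- local_seq p].

Arguments apply_local : clear implicits.
Arguments apply_sparse : clear implicits.

Lemma apply_sparseE p E s g :
  apply_local p (fun z x => eis_val (E z x)) (sparse_val s) g =
  sparse_val (apply_sparse p E s) g.
Proof.
rewrite (sparse_val_norm gidx_eqbE) /sparse_val big_mkcond big_allpairs_dep /= /apply_local.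
rewrite (eq_bigr (fun x => \sum_(q <- s) if q.1 == local_set p g x
                   then eis_val (E (local_get p g) x) * eis_val q.2 else 0)); last first.
  move=> x _; rewrite big_mkcond mulr_sumr; apply: eq_bigr => q _.
  by case: ifP; rewrite ?mulr0.
rewrite exchange_big /=; apply: eq_bigr => q _.
rewrite (sum_seq_enum _ (local_seq_uniq p) (@mem_local_seq p)).
under eq_bigr => x _ do rewrite eq_sym local_set_eq.
under [in RHS]eq_bigr => z _ do rewrite local_set_eq eis_valM.
by rewrite !sum_if_eq local_set_swap.
Qed.

(** * Instruments and plans *)

Record kraus (T : Type) := Kraus { kraus_den : Z; kraus_mx : T -> T -> eis }.

Definition kraus_op (T : Type) (k : kraus T) : T -> T -> algC :=
  fun z x => eis_val (kraus_mx k z x) / Zval (kraus_den k).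

Lemma apply_local_kraus p (k : kraus (local p)) c s :
  apply_local p (kraus_op k) (fun g => c * sparse_val s g) =
  (fun g => c / Zval (kraus_den k) * sparse_val (apply_sparse p (kraus_mx k) s) g).
Proof.
apply: functional_extensionality => g; rewrite -apply_sparseE /apply_local mulr_sumr.
by apply: eq_bigr => x _; rewrite /kraus_op; ring.
Qed.

Section Completeness.
Variables (T : finType) (r : seq T).
Hypotheses (r_uniq : uniq r) (mem_r : forall x, x \in r).

Definition gram (k : kraus T) (x y : T) : eis :=
  eis_sum r (fun z => eis_mul (eis_conj (kraus_mx k z x)) (kraus_mx k z y)).

Lemma kraus_op_gram k x y :
  \sum_z (kraus_op k z x)^* * kraus_op k z y =
  eis_val (gram k x y) / Zval (kraus_den k) / Zval (kraus_den k).
Proof.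
rewrite /gram eis_val_sum (sum_seq_enum _ r_uniq mem_r) !mulr_suml; apply: eq_bigr => z _.
by rewrite eis_valM eis_val_conj /kraus_op rmorphM fmorphV /= Zval_conj; ring.
Qed.

Definition den_lcm (ks : seq (kraus T)) : Z :=
  foldr (fun k L => Z.lcm (kraus_den k ^+ 2) L) 1 ks.

Definition den_weight (L : Z) (k : kraus T) : Z := Z.div L (kraus_den k ^+ 2).

(* [complete] asks for [\sum_k K_k^* K_k = 1]; with [K_k = E_k / d_k] this is checked
   exactly in Z[w3] after multiplying by a common multiple [L] of the [d_k ^ 2]. *)
Definition complete_check (ks : seq (kraus T)) : bool :=
  let L := den_lcm ks in
  [&& L != 0,
   all (fun k => den_weight L k * kraus_den k ^+ 2 == L) ks &
   all (fun x => all (fun y =>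
     eis_sum ks (fun k => eis_mul (den_weight L k, 0) (gram k x y)) ==
     (if x == y then (L, 0) else 0)) r) r].

Lemma complete_checkP ks : complete_check ks -> complete (map (@kraus_op T) ks).
Proof.
rewrite /complete_check; set L := den_lcm ks.
case/and3P=> L_neq0 /eq_big_all weightP /allP gram_sum x y.
have ZL_neq0 : Zval L != 0 by rewrite Zval_eq0.
rewrite big_map (weightP _ (fun k => eis_val (eis_mul (den_weight L k, 0) (gram k x y))
                                     / Zval L)); last first.
  move=> k /eqP weight_den; rewrite kraus_op_gram eis_valM eis_val_Z.
  have ZL : Zval (den_weight L k) * Zval (kraus_den k) ^+ 2 = Zval L.
    by rewrite -[in RHS]weight_den ZvalM /Zval !rmorphXn.
  have Zd_neq0 : Zval (kraus_den k) != 0.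
    by apply: contraNneq ZL_neq0; rewrite -ZL => ->; rewrite expr0n mulr0.
  have Zw_neq0 : Zval (den_weight L k) != 0.
    by apply: contraNneq ZL_neq0; rewrite -ZL => ->; rewrite mul0r.
  by rewrite -ZL; field; rewrite Zd_neq0 Zw_neq0.
rewrite -big_distrl -eis_val_sum /=.
move/allP: (gram_sum x (mem_r x)) => /(_ y (mem_r y)) /eqP ->.
by case: eqP => _; rewrite ?eis_val0 ?mul0r // eis_val_Z mulfV.
Qed.
End Completeness.

Inductive plan : Type :=
| Guess of nat
| Step (p : party) of seq (kraus (local p) * plan).

Arguments Step : clear implicits.

Definition plan_ind_in (P : plan -> Prop) (P_guess : forall i, P (Guess i))
    (P_step : forall p br, (forall kq, List.In kq br -> P kq.2) -> P (Step p br)) :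
  forall Q, P Q :=
  fix IH Q := match Q with
  | Guess i => P_guess i
  | Step p br => P_step p br
      ((fix IH_br l : forall kq, List.In kq l -> P kq.2 :=
          match l with
          | [::] => fun kq (in_nil : False) => False_ind _ in_nil
          | kq' :: l' => fun kq in_l => match in_l with
              | or_introl e => eq_ind kq' (fun kq => P kq.2) (IH kq'.2) kq e
              | or_intror in_l' => IH_br l' kq in_l'
              end
          end) br)
  end.

Definition step_of (p : party) : seq ((local p -> local p -> algC) * protocol) -> protocol :=
  match p with Alice => StepA | Bob => StepB | Charlie => StepC end.

Arguments step_of : clear implicits.

Fixpoint plan_protocol (Q : plan) : protocol :=
  match Q with
  | Guess i => Leaf i
  | Step p br => step_of p [seq (kraus_op kq.1, plan_protocol kq.2) | kq <- br]
  end.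

Lemma valid_plan_step p br :
  complete [seq kraus_op kq.1 | kq <- br] ->
  (forall kq, List.In kq br -> valid (plan_protocol kq.2)) ->
  valid (plan_protocol (Step p br)).
Proof.
case: p br => br compl_br valid_br /=; split; try by rewrite -map_comp.
all: elim: br {compl_br} valid_br => //= kq br IH valid_br.
all: by split; [apply: valid_br; left | apply: IH => kq' in_br; apply: valid_br; right].
Qed.

Lemma always_guesses_plan_step p br psi i :
  (forall kq, List.In kq br ->
     always_guesses (plan_protocol kq.2) (apply_local p (kraus_op kq.1) psi) i) ->
  always_guesses (plan_protocol (Step p br)) psi i.
Proof.
case: p br => br /=; elim: br => //= kq br IH guess_br.
all: by split; [apply: guess_br; left | apply: IH => kq' in_br; apply: guess_br; right].
Qed.

Fixpoint plan_valid (Q : plan) : bool :=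
  match Q with
  | Guess _ => true
  | Step p br => complete_check (local_seq p) (map fst br) && all (fun kq => plan_valid kq.2) br
  end.

Fixpoint plan_guesses (Q : plan) (s : seq (gidx * eis)) (i : nat) : bool :=
  match Q with
  | Guess g => nilp s || (g == i)
  | Step p br => all (fun kq => plan_guesses kq.2 (apply_sparse p (kraus_mx kq.1) s) i) br
  end.

Lemma plan_validP Q : plan_valid Q -> valid (plan_protocol Q).
Proof.
elim/plan_ind_in: Q => // p br IH /andP[compl_br valid_br]; apply: valid_plan_step.
  by move: (complete_checkP (local_seq_uniq p) (@mem_local_seq p) compl_br); rewrite -map_comp.
by move=> kq in_br; apply: IH => //; exact: all_In valid_br in_br.
Qed.

Lemma plan_guessesP Q s c i :
  plan_guesses Q s i -> always_guesses (plan_protocol Q) (fun g => c * sparse_val s g) i.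
Proof.
elim/plan_ind_in: Q s c => [g|p br IH] s c /=.
  by case/orP => [/nilP-> | /eqP->]; [left => g'; rewrite /sparse_val big_nil mulr0 | right].
move=> guess_br; apply: always_guesses_plan_step => kq in_br.
by rewrite apply_local_kraus; apply: IH => //; exact: all_In guess_br in_br.
Qed.

Definition with_resource_eis (psi : idx3 -> eis) (g : gidx) : eis :=
  let: (a, a1, (b, b1, b2), (c, c2)) := g in
  if (a1 == b1 :> nat) && (b2 == c2 :> nat) then psi (a, b, c) else 0.

Lemma with_resource_eisE psi g :
  with_resource (eis_val \o psi) g = eis_val (with_resource_eis psi g).
Proof.
case: g => [[[a a1] [[b b1] b2]] [c c2]]; rewrite /with_resource /with_resource_eis /Phi2 /=.
by do 2 case: eqP => _; rewrite ?mulr1 ?mulr0 ?eis_val0.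
Qed.

Lemma plan_distinguishes Q (S : seq (idx3 -> eis)) :
  plan_valid Q ->
  all (fun i => plan_guesses Q (sparse_of gidx_seq (with_resource_eis (nth (fun _ => 0) S i))) i)
      (iota 0 (size S)) ->
  LOCC_perfectly_distinguishable [seq with_resource psi | psi <- [seq eis_val \o psi | psi <- S]].
Proof.
move=> valid_Q /allP guesses_Q; exists (plan_protocol Q); split; first exact: plan_validP.
move=> i; rewrite -map_comp size_map => lt_i_S; rewrite (nth_map (fun _ => 0)) //=.
have -> : with_resource (eis_val \o nth (fun _ => 0) S i) =
          fun g => 1 * sparse_val (sparse_of gidx_seq (with_resource_eis (nth (fun _ => 0) S i))) g.
  apply: functional_extensionality => g.
  by rewrite mul1r sparse_val_of ?gidx_seq_uniq ?mem_gidx_seq // with_resource_eisE.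
by apply: plan_guessesP; apply: guesses_Q; rewrite mem_iota.
Qed.

Definition ket_eis n (j : nat) : 'I_n -> eis := fun x => if x == j :> nat then (1, 0) else 0.

Arguments ket_eis : clear implicits.

Definition sign_eis (s : nat) : eis := if odd s then (-1, 0) else (1, 0).
Definition w3_exp_eis (n : nat) : eis :=
  match (n %% 3)%N with 0 => (1, 0) | 1 => (0, 1) | _ => (-1, -1) end.
Definition etaAB_eis (s : nat) : 'I_3 -> eis :=
  fun t => if t == 0 :> nat then (1, 0) else if t == 1 :> nat then sign_eis s else 0.
Definition xiAB_eis (s : nat) : 'I_3 -> eis :=
  fun t => if t == 1 :> nat then (1, 0) else if t == 2 :> nat then sign_eis s else 0.
Definition etaC_eis (s : nat) : 'I_4 -> eis :=
  fun t => if (t < 3)%N then w3_exp_eis (s * t) else 0.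
Definition xiC_eis (s : nat) : 'I_4 -> eis :=
  fun t => if (0 < t)%N then w3_exp_eis (s * t.-1) else 0.
Definition pstate_eis (a b : 'I_3 -> eis) (c : 'I_4 -> eis) : idx3 -> eis :=
  fun x => eis_mul (eis_mul (a x.1.1) (b x.1.2)) (c x.2).

Lemma eis_val_sign s : eis_val (sign_eis s) = (-1) ^+ s.
Proof. by rewrite -signr_odd /sign_eis; case: odd; rewrite eis_val_Z ?ZvalN Zval1. Qed.

Lemma eis_val_w3_exp n : eis_val (w3_exp_eis n) = w3 ^+ n.
Proof.
rewrite -(expr_mod n w3_cube) /w3_exp_eis.
have : (n %% 3 < 3)%N by rewrite ltn_pmod.
by case: (n %% 3)%N => [|[|[|m]]] // _; rewrite /eis_val /= ?ZvalN ?Zval0 Zval1 ?w3_sqr; ring.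
Qed.

(* The shape of [UPB], abstracted over the vectors and the product state so that it can be
   instantiated both over algC and over Z[w3]. *)
Definition upb_of (V3 V4 W : Type) (prod : V3 -> V3 -> V4 -> W)
    (ket3 : nat -> V3) (ket4 : nat -> V4) (eta xi : nat -> V3) (etaC xiC : nat -> V4)
    (f : V4) (one3 : V3) (one4 : V4) : seq W :=
  [seq prod (xi p.1) (ket3 0) (etaC p.2) | p <- pairs23] ++
  [seq prod (xi p.1) (eta p.2) (ket4 3) | p <- pairs22] ++
  [seq prod (ket3 2) (xi p.1) (etaC p.2) | p <- pairs23] ++
  [seq prod (eta p.1) (ket3 2) (xiC p.2) | p <- pairs23] ++
  [seq prod (eta p.1) (xi p.2) (ket4 0) | p <- pairs22] ++
  [seq prod (ket3 0) (eta p.1) (xiC p.2) | p <- pairs23] ++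
  [:: prod (ket3 1) (ket3 1) f] ++ [:: prod one3 one3 one4].

Lemma map_upb_of (V3 V4 W V3' V4' W' : Type)
    (prod : V3 -> V3 -> V4 -> W) (prod' : V3' -> V3' -> V4' -> W')
    (h3 : V3 -> V3') (h4 : V4 -> V4') (h : W -> W') ket3 ket4 eta xi etaC xiC f one3 one4 :
  (forall a b c, h (prod a b c) = prod' (h3 a) (h3 b) (h4 c)) ->
  map h (upb_of prod ket3 ket4 eta xi etaC xiC f one3 one4) =
  upb_of prod' (h3 \o ket3) (h4 \o ket4) (h3 \o eta) (h3 \o xi)
         (h4 \o etaC) (h4 \o xiC) (h4 f) (h3 one3) (h4 one4).
Proof.
by move=> h_prod; rewrite /upb_of !map_cat /= !h_prod.
Qed.

Lemma UPB_upb_of :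
  UPB = upb_of pstate (ket 3) (ket 4) etaAB xiAB etaC xiC
               (fun t => ket 4 1 t - ket 4 2 t) (fun _ => 1) (fun _ => 1).
Proof. by []. Qed.

Definition UPB_eis : seq (idx3 -> eis) :=
  upb_of pstate_eis (ket_eis 3) (ket_eis 4) etaAB_eis xiAB_eis etaC_eis xiC_eis
         (fun t => ket_eis 4 1 t - ket_eis 4 2 t) (fun _ => (1, 0)) (fun _ => (1, 0)).

Lemma ket_eisE n j x : eis_val (ket_eis n j x) = ket n j x.
Proof. by rewrite /ket_eis /ket; case: eqP; rewrite ?eis_val1 ?eis_val0. Qed.

Lemma etaAB_eisE s t : eis_val (etaAB_eis s t) = etaAB s t.
Proof.
by rewrite /etaAB_eis /etaAB; do 2?case: ifP => _; rewrite ?eis_val1 ?eis_val_sign ?eis_val0.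
Qed.

Lemma xiAB_eisE s t : eis_val (xiAB_eis s t) = xiAB s t.
Proof.
by rewrite /xiAB_eis /xiAB; do 2?case: ifP => _; rewrite ?eis_val1 ?eis_val_sign ?eis_val0.
Qed.

Lemma etaC_eisE s t : eis_val (etaC_eis s t) = etaC s t.
Proof. by rewrite /etaC_eis /etaC; case: ifP; rewrite ?eis_val_w3_exp ?eis_val0. Qed.

Lemma xiC_eisE s t : eis_val (xiC_eis s t) = xiC s t.
Proof. by rewrite /xiC_eis /xiC; case: ifP; rewrite ?eis_val_w3_exp ?eis_val0. Qed.

Lemma UPB_eisE : UPB = [seq eis_val \o psi | psi <- UPB_eis].
Proof.
rewrite UPB_upb_of /UPB_eis (map_upb_of (prod' := pstate) (h3 := comp eis_val)
                                         (h4 := comp eis_val)); last first.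
  by move=> a b c; apply: functional_extensionality => x; rewrite /= !eis_valM.
congr upb_of; do !apply: functional_extensionality => ?.
all: by rewrite /= ?eis_valD ?eis_valN ?ket_eisE ?etaAB_eisE ?xiAB_eisE ?etaC_eisE ?xiC_eisE
                ?eis_val1.
Qed.

(** * The protocol *)

Definition sys_dim (p : party) : nat := if p is Charlie then 4 else 3.

Definition local_sys (p : party) : local p -> 'I_(sys_dim p) :=
  match p with
  | Alice => fun x : LA => x.1 | Bob => fun x : LB => x.1.1 | Charlie => fun x : LC => x.1
  end.

Arguments local_sys : clear implicits.

Definition same_ebit_halves (p : party) : local p -> local p -> bool :=
  match p with
  | Alice => fun z x : LA => z.2 == x.2 :> nat
  | Bob => fun z x : LB => (z.1.2 == x.1.2 :> nat) && (z.2 == x.2 :> nat)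
  | Charlie => fun z x : LC => z.2 == x.2 :> nat
  end.

Arguments same_ebit_halves : clear implicits.

Definition diag_kraus (p : party) (d : 'I_(sys_dim p) -> eis) : kraus (local p) :=
  Kraus 1 (fun z x : local p =>
    if same_ebit_halves p z x && (local_sys p z == local_sys p x :> nat)
    then d (local_sys p x) else 0).

Arguments diag_kraus : clear implicits.

Definition proj_kraus (p : party) (P : seq nat) : kraus (local p) :=
  diag_kraus p (fun i => if (i : nat) \in P then (1, 0) else 0).

Definition flip_kraus (p : party) (j : nat) (b : bool) : kraus (local p) :=
  diag_kraus p (fun i => if b && (i == j :> nat) then (-1, 0) else (1, 0)).

Definition eis_norm2 (a : eis) : Z := a.1 ^+ 2 - a.1 * a.2 + a.2 ^+ 2.

Definition ray_kraus (p : party) (v : 'I_(sys_dim p) -> eis) : kraus (local p) :=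
  Kraus (foldr (fun i n => eis_norm2 (v i) + n) 0 (ord_seq _))
        (fun z x : local p =>
           if same_ebit_halves p z x
           then eis_mul (v (local_sys p z)) (eis_conj (v (local_sys p x))) else 0).

Arguments ray_kraus : clear implicits.

(* Projects onto the span of the |x>|[x = j] xor o> and resets the ebit half: afterwards the
   partner's half of the ebit holds the bit [x = j] xor o. *)
Definition flag_kraus n (j : nat) (o : bool) : kraus ('I_n * 'I_2) :=
  Kraus 1 (fun z x : 'I_n * 'I_2 =>
    if [&& z.1 == x.1 :> nat, z.2 == 0 :> nat & x.2 == (x.1 == j :> nat) (+) o :> nat]
    then (1, 0) else 0).

(* Bob projects onto the triples (b, [a = 0], [c = 3]) of region [R], reading the flags off
   his ebit halves, and measures both halves in the Hadamard basis.  Outcome (s, t) leaves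
   the phase (-1)^(s [a = 0] + t [c = 3]), which Alice and Charlie then undo locally. *)
Definition hadamard_kraus (R : nat -> bool -> bool -> bool) (oa oc s t : bool) : kraus LB :=
  Kraus 2 (fun z x : LB =>
    let a0 := (x.1.2 == 1 :> nat) (+) oa in
    let c3 := (x.2 == 1 :> nat) (+) oc in
    if [&& z.1.1 == x.1.1 :> nat, z.1.2 == 0 :> nat, z.2 == 0 :> nat & R x.1.1 a0 c3]
    then (if (s && a0) (+) (t && c3) then (-1, 0) else (1, 0)) else 0).

Definition measure (p : party) (basis : seq ('I_(sys_dim p) -> eis)) (next : seq plan) : plan :=
  Step p (zip [seq ray_kraus p v | v <- basis] next).

Arguments measure : clear implicits.

Definition project (p : party) (parts : seq (seq nat)) (next : seq plan) : plan :=
  Step p (zip [seq proj_kraus p P | P <- parts] next).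

Definition xi_basis : seq ('I_3 -> eis) := [:: ket_eis 3 0; xiAB_eis 0; xiAB_eis 1].
Definition eta_basis : seq ('I_3 -> eis) := [:: etaAB_eis 0; etaAB_eis 1; ket_eis 3 2].
Definition etaC_basis : seq ('I_4 -> eis) := [:: etaC_eis 0; etaC_eis 1; etaC_eis 2; ket_eis 4 3].
Definition xiC_basis : seq ('I_4 -> eis) := [:: ket_eis 4 0; xiC_eis 0; xiC_eis 1; xiC_eis 2].
Definition F_basis : seq ('I_4 -> eis) :=
  [:: ket_eis 4 0; (fun t => ket_eis 4 1 t + ket_eis 4 2 t);
      (fun t => ket_eis 4 1 t - ket_eis 4 2 t); ket_eis 4 3].

Definition guess_in (offset : nat) (pairs : seq (nat * nat)) (i j : nat) : plan :=
  Guess (offset + index (i, j) pairs).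

Definition guess_A1 := guess_in 0 pairs23.
Definition guess_A2 := guess_in 5 pairs22.
Definition guess_A3 := guess_in 8 pairs23.
Definition guess_B1 := guess_in 13 pairs23.
Definition guess_B2 := guess_in 18 pairs22.
Definition guess_B3 := guess_in 21 pairs23.
Definition guess_F := Guess 26.
Definition guess_S := Guess 27.

(* Reached with zero amplitude by every state, so the guess does not matter. *)
Definition dead_end := Guess 0.

Definition plan_A1 : plan :=
  measure Alice xi_basis
    [:: dead_end;
        measure Charlie etaC_basis [:: guess_S; guess_A1 0 1; guess_A1 0 2; dead_end];
        measure Charlie etaC_basis [:: guess_A1 1 0; guess_A1 1 1; guess_A1 1 2; dead_end]].

Definition plan_A2 : plan :=
  measure Bob eta_basis
    [:: measure Alice xi_basis [:: dead_end; guess_S; guess_A2 1 0];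
        measure Alice xi_basis [:: dead_end; guess_A2 0 1; guess_A2 1 1];
        dead_end].

Definition plan_A3 : plan :=
  measure Bob xi_basis
    [:: dead_end;
        measure Charlie etaC_basis [:: guess_S; guess_A3 0 1; guess_A3 0 2; guess_S];
        measure Charlie etaC_basis [:: guess_A3 1 0; guess_A3 1 1; guess_A3 1 2; guess_S]].

Definition plan_B1 : plan :=
  measure Alice eta_basis
    [:: measure Charlie xiC_basis [:: dead_end; guess_S; guess_B1 0 1; guess_B1 0 2];
        measure Charlie xiC_basis [:: dead_end; guess_B1 1 0; guess_B1 1 1; guess_B1 1 2];
        dead_end].

Definition plan_B2 : plan :=
  measure Alice eta_basis
    [:: measure Bob xi_basis [:: guess_S; guess_S; guess_B2 0 1];
        measure Bob xi_basis [:: guess_S; guess_B2 1 0; guess_B2 1 1];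
        dead_end].

Definition plan_B3_F : plan :=
  project Alice [:: [:: 0]; [:: 1; 2]]
    [:: measure Bob eta_basis
          [:: measure Charlie xiC_basis [:: dead_end; guess_S; guess_B3 0 1; guess_B3 0 2];
              measure Charlie xiC_basis [:: dead_end; guess_B3 1 0; guess_B3 1 1; guess_B3 1 2];
              dead_end];
        measure Charlie F_basis [:: dead_end; guess_S; guess_F; dead_end]].

Definition plan_rest : plan :=
  project Alice [:: [:: 0; 1]; [:: 2]]
    [:: project Charlie [:: [:: 0]; [:: 1; 2; 3]]
          [:: plan_B2; project Bob [:: [:: 0; 1]; [:: 2]] [:: plan_B3_F; plan_B1]];
        plan_A3].

Definition region_A1 (b : nat) (a0 c3 : bool) : bool := [&& b == 0, ~~ a0 & ~~ c3].
Definition region_A2 (b : nat) (a0 c3 : bool) : bool := [&& (b <= 1)%N, ~~ a0 & c3].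
Definition region_rest (b : nat) (a0 c3 : bool) : bool :=
  ~~ region_A1 b a0 c3 && ~~ region_A2 b a0 c3.

Definition undo_phase (s t : bool) (next : plan) : plan :=
  Step Alice [:: (flip_kraus Alice 0 s, Step Charlie [:: (flip_kraus Charlie 3 t, next)])].

Definition bob_round (oa oc : bool) : plan :=
  Step Bob [seq (hadamard_kraus Rq.1 oa oc st.1 st.2, undo_phase st.1 st.2 Rq.2)
           | Rq <- [:: (region_A1, plan_A1); (region_A2, plan_A2); (region_rest, plan_rest)],
             st <- pair_seq [:: false; true] [:: false; true]].

Definition upb_plan : plan :=
  Step Alice [seq (flag_kraus 3 0 oa,
                   Step Charlie [seq (flag_kraus 4 3 oc, bob_round oa oc) | oc <- [:: false; true]])
             | oa <- [:: false; true]].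

Theorem proposition3 :
  LOCC_perfectly_distinguishable [seq with_resource psi | psi <- UPB].
Proof.
by rewrite UPB_eisE; apply: (plan_distinguishes (Q := upb_plan)); vm_compute.
Qed.
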